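(* Let $p$ be an odd prime. Let $M_p$ be the number of solutions $(x,y,z)\in\mathbb{F}_p^3$ of $$z^2=(x^2y^2+1)(x^2+y^2),$$ and let $N_p$ be the number of solutions $(x,y)\in\mathbb{F}_p^2$ of $y^2=x^3-x$. Then $$M_p=(p+1)^2+(N_p-p)^2+1=\begin{cases}(p+1)^2+J(k)^2+1 & \text{if } p=4k+1,\\ (p+1)^2+1 & \text{if } p=4k+3,\end{cases}$$ where for $p=4k+1$, $J(k)=\sum_{i=1}^{4k-2}\big(\frac{i(i+1)(i+2)}{p}\big)$.
   Context: $\big(\frac{a}{p}\big)$ is the Legendre symbol. *)

From HB Require Import structures.
From mathcomp Require Import all_boot all_order all_algebra.
Set Implicit Arguments. Unset Strict Implicit. Unset Printing Implicit Defensive.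
Import Order.TTheory GRing.Theory Num.Theory.
Local Open Scope ring_scope.

Definition legendre (a : int) (p : nat) : int :=
  if (p%:Z %| a)%Z then 0
  else if [exists x : 'F_p, x ^+ 2 == a%:~R] then 1 else -1.

Definition M_count (p : nat) : nat :=
  #|[set t : 'F_p * 'F_p * 'F_p |
      let: (x, y, z) := t in
      z ^+ 2 == (x ^+ 2 * y ^+ 2 + 1) * (x ^+ 2 + y ^+ 2)]|.

Definition N_count (p : nat) : nat :=
  #|[set t : 'F_p * 'F_p | let: (x, y) := t in y ^+ 2 == x ^+ 3 - x]|.

Definition J (p k : nat) : int :=
  \sum_(1 <= i < (4 * k - 2).+1) legendre (i * (i + 1) * (i + 2))%N%:Z p.

From mathcomp Require Import all_boot all_order all_algebra.
From mathcomp Require Import finfield ring zify.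
Set Implicit Arguments. Unset Strict Implicit. Unset Printing Implicit Defensive.
Import Order.TTheory GRing.Theory Num.Theory.
Local Open Scope ring_scope.

(* Write chi for the quadratic character.  Since z^2 = c has 1 + chi(c) solutions,
   M_p = p^2 + sum_{x,y} chi(P(x^2, y^2)) with P(u, v) = (uv + 1)(u + v), and
   N_p = p + a with a = sum_x chi(x^3 - x).  Weighting u = x^2 and v = y^2 by their
   numbers of square roots, the sums over v become character sums of quadratics in v,
   equal to p - 1 or -1 according as the roots -u and -1/u coincide or not; this gives
   sum_{x,y} chi(P(x^2, y^2)) = 3p + 2 + p chi(-1) + T with T = sum_{u,v} chi(uv P(u, v)).
   Rescaling y = x r in a^2 = sum_{x,y} chi(x^3 - x) chi(y^3 - y) gives
   a^2 = p (1 + chi(-1)) + T as well, whence M_p = (p + 1)^2 + a^2 + 1.  For p = 4k + 3,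
   chi(-1) = -1 and x |-> -x shows a = 0; for p = 4k + 1, shifting x |-> x + 1 turns a
   into J(k).  Multiplicativity of chi comes from Euler's criterion chi(a) = a^((p-1)/2). *)

Lemma card_set_sumz (T : finType) (P : pred T) :
  #|[set t | P t]|%:Z = \sum_t (P t)%:R.
Proof.
by rewrite -sum1dep_card -natz natr_sum big_mkcond; apply: eq_bigr => t _; case: (P t).
Qed.

Section QuadraticCharacter.

Variable F : finFieldType.
Hypothesis two_neq0 : (2 : F) != 0.

Local Notation q := (#|F|%:Z).

Definition qchar (a : F) : int :=
  if a == 0 then 0 else if [exists y, y ^+ 2 == a] then 1 else -1.

Lemma qchar0 : qchar 0 = 0.
Proof. by rewrite /qchar eqxx. Qed.

Lemma qchar_sqr x : x != 0 -> qchar (x ^+ 2) = 1.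
Proof.
move=> x0; rewrite /qchar sqrf_eq0 (negPf x0).
by case: existsP => // -[]; exists x.
Qed.

Lemma qchar1 : qchar 1 = 1.
Proof. by rewrite -(expr1n F 2) qchar_sqr ?oner_neq0. Qed.

Lemma normr_qchar_le1 a : `|qchar a| <= 1.
Proof. by rewrite /qchar; case: eqP => // _; case: existsP. Qed.

Lemma card_sqrt a : #|[set z : F | z ^+ 2 == a]|%:Z = 1 + qchar a.
Proof.
rewrite /qchar; have [->|a0] := eqVneq a 0.
  suff -> : [set z : F | z ^+ 2 == 0] = [set 0] by rewrite cards1.
  by apply/setP => z; rewrite !inE sqrf_eq0.
case: existsP => [[y /eqP ya]|no_root]; last first.
  suff -> : [set z : F | z ^+ 2 == a] = set0 by rewrite cards0.
  by apply/setP => z; rewrite !inE; apply: contra_notF no_root => hz; exists z.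
rewrite -ya in a0 *; have y0 : y != 0 by apply: contraNneq a0 => ->; rewrite expr0n.
have -> : [set z : F | z ^+ 2 == y ^+ 2] = [set y; - y].
  by apply/setP => z; rewrite !inE eqf_sqr.
rewrite cards2; suff -> : y != - y by [].
apply: contra y0 => /eqP y_eqN.
suff: 2 * y == 0 by rewrite mulf_eq0 (negPf two_neq0).
by rewrite mulr2n mulrDl mul1r {1}y_eqN addNr.
Qed.

Lemma sum_sqr (f : F -> int) : \sum_x f (x ^+ 2) = \sum_u (1 + qchar u) * f u.
Proof.
under [RHS]eq_bigr do rewrite -card_sqrt card_set_sumz mulr_suml.
rewrite exchange_big /=; apply: eq_bigr => x _.
rewrite (bigD1 (x ^+ 2)) //= eqxx mul1r big1 ?addr0 // => u /negPf.
by rewrite eq_sym => ->; rewrite mul0r.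
Qed.

Lemma sumr1_card : \sum_(x : F) 1 = q :> int.
Proof. by rewrite sumr_const natz. Qed.

Lemma sum_add1_qchar : \sum_u (1 + qchar u) = q.
Proof.
rewrite -sumr1_card (sum_sqr (fun=> 1)).
by apply: eq_bigr => u _; rewrite mulr1.
Qed.

Lemma sum_qchar : \sum_a qchar a = 0.
Proof.
have := sum_add1_qchar; rewrite big_split /= sumr1_card => /(canRL (addKr _)).
by rewrite addNr.
Qed.

Lemma card_F_qchar1 : #|F| = (#|[set a : F | qchar a == 1]|).*2.+1.
Proof.
suff : q = 1 + #|[set a : F | qchar a == 1]|%:Z * 2 by lia.
rewrite -sum_add1_qchar (bigD1 (0 : F)) //= qchar0 addr0; congr (_ + _).
rewrite card_set_sumz mulr_suml [RHS](bigD1 (0 : F)) //= qchar0 mul0r add0r.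
by apply: eq_bigr => a a0; rewrite /qchar (negPf a0); case: existsP.
Qed.

Lemma qchar_eq1 a : (qchar a == 1) = (a != 0) && [exists y, y ^+ 2 == a].
Proof. by rewrite /qchar; have [->|_] //= := eqVneq a 0; case: existsP. Qed.

Lemma half_card_F : (#|F|./2 * 2).+1 = #|F|.
Proof. by rewrite muln2 card_F_qchar1 /= uphalf_double. Qed.

Lemma expf_half_card (x : F) : x != 0 -> x ^+ (#|F|./2 * 2) = 1.
Proof.
by move=> x0; apply: (mulfI x0); rewrite mulr1 -exprS half_card_F expf_card.
Qed.

Lemma euler_criterion a : (qchar a)%:~R = a ^+ #|F|./2.
Proof.
set SQ := [set a : F | qchar a == 1].
have card_SQ : #|SQ| = #|F|./2 by rewrite card_F_qchar1 /= uphalf_double.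
have half_gt0 : (0 < #|F|./2)%N.
  by rewrite -card_SQ; apply/card_gt0P; exists 1; rewrite inE qchar1.
have SQ_root x : x \in SQ -> x ^+ #|F|./2 = 1.
  rewrite inE qchar_eq1 => /andP[x0 /existsP[y /eqP yx]].
  have y0 : y != 0 by apply: contraNneq x0 => y0; rewrite -yx y0 expr0n.
  by rewrite -yx -exprM mulnC expf_half_card.
have [->|a0] := eqVneq a 0; first by rewrite qchar0 expr0n gtn_eqF.
case: (boolP (a \in SQ)) => [aSQ|aNSQ].
  by rewrite SQ_root //; move: aSQ; rewrite inE => /eqP ->.
have -> : qchar a = -1.
  by move: aNSQ; rewrite inE /qchar (negPf a0); case: existsP.
have : (a ^+ #|F|./2) ^+ 2 == 1 by rewrite -exprM expf_half_card.
rewrite sqrf_eq1 => /orP[/eqP a_root|/eqP ->]; last by [].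
(* Otherwise 'X^m - 1, with m = #|F|./2, has the m nonzero squares and a as roots. *)
suff : (#|F|./2.+1 < #|F|./2.+1)%N by rewrite ltnn.
have {1}<- : size (a :: enum SQ) = #|F|./2.+1 by rewrite /= -cardE card_SQ.
rewrite -(size_XnsubC (1 : F) half_gt0); apply: max_poly_roots.
- by rewrite -size_poly_eq0 (size_XnsubC (1 : F)).
- rewrite /= /root !hornerE a_root subrr eqxx /=; apply/allP => y.
  by rewrite mem_enum => /SQ_root y_root; rewrite !hornerE y_root subrr.
- by rewrite /= enum_uniq mem_enum aNSQ.
Qed.

Lemma intr_inj_norm_le1 (i j : int) :
  `|i| <= 1 -> `|j| <= 1 -> (i%:~R : F) = j%:~R -> i = j.
Proof.
move=> i_small j_small /eqP; rewrite -subr_eq0 -intrB; apply: contraTeq.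
rewrite -subr_eq0; have : i - j \in [:: 1; 2; -1; -2; 0] by rewrite !inE; lia.
rewrite !inE => /or4P[|||/orP[]] /eqP -> //= _.
all: by rewrite ?mulr1z ?mulrN1z ?(mulrNz _ 2) ?oppr_eq0 ?oner_eq0.
Qed.

Lemma qcharM a b : qchar (a * b) = qchar a * qchar b.
Proof.
apply: intr_inj_norm_le1; rewrite ?normrM ?mulr_ile1 ?normr_qchar_le1 //.
by rewrite intrM !euler_criterion exprMn.
Qed.

Lemma qchar_sqrM u w : u != 0 -> qchar (u ^+ 2 * w) = qchar w.
Proof. by move=> u0; rewrite qcharM qchar_sqr ?mul1r. Qed.

Lemma sqr_qchar a : qchar a ^+ 2 = (a != 0)%:R.
Proof.
rewrite expr2 -qcharM -expr2.
by have [->|a0] := eqVneq a 0; rewrite ?expr0n ?qchar0 ?qchar_sqr.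
Qed.

Lemma sum_nonzero : \sum_(a : F) (a != 0)%:R = q - 1 :> int.
Proof.
rewrite -sumr1_card (bigD1 (0 : F)) //= [in RHS](bigD1 (0 : F)) //= eqxx add0r.
by rewrite addrAC subrr add0r; apply: eq_bigr => a ->.
Qed.

Lemma sum_sqr_eq1 (f : F -> int) : \sum_u (u ^+ 2 == 1)%:R * f u = f 1 + f (-1).
Proof.
have N1_neq1 : (-1 : F) != 1.
  apply: contra two_neq0 => /eqP N1_eq1; apply/eqP.
  by rewrite mulr2n -{1}N1_eq1 addNr.
rewrite (bigD1 1) //= (bigD1 (-1)) //= expr1n sqrrN expr1n eqxx !mul1r addrA.
by rewrite big1 ?addr0 // => u /andP[u1 uN1]; rewrite sqrf_eq1 (negPf u1) (negPf uN1) mul0r.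
Qed.

Lemma sum_addr (V : nmodType) (f : F -> V) c : \sum_x f (x + c) = \sum_x f x.
Proof. by rewrite [RHS](reindex_inj (addIr c)). Qed.

Lemma sum_mulr (V : nmodType) (f : F -> V) c :
  c != 0 -> \sum_x f (c * x) = \sum_x f x.
Proof. by move=> c0; rewrite [RHS](reindex_inj (mulfI c0)). Qed.

Lemma sum_oppr (V : nmodType) (f : F -> V) : \sum_x f (- x) = \sum_x f x.
Proof. by rewrite [RHS](reindex_inj (@oppr_inj F)). Qed.

Lemma sum_invr (V : nmodType) (f : F -> V) : \sum_x f (x ^-1) = \sum_x f x.
Proof. by rewrite [RHS](reindex_inj (@invr_inj F)). Qed.

Lemma sum_subr (V : nmodType) (f : F -> V) c : \sum_x f (c - x) = \sum_x f x.
Proof. by rewrite [RHS](reindex_inj (subrI c)). Qed.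

Lemma sum_qchar_mul_sub d : \sum_v qchar (v * (v - d)) = (d == 0)%:R * q - 1.
Proof.
have [->|d0] := eqVneq d 0.
  by rewrite mul1r -sum_nonzero; apply: eq_bigr => v _; rewrite subr0 qcharM -expr2 sqr_qchar.
have shift v : qchar (v * (v - d)) = qchar (1 - d * v^-1) - (v == 0)%:R.
  have [->|v0] := eqVneq v 0; first by rewrite mul0r qchar0 invr0 mulr0 subr0 qchar1 subrr.
  by rewrite subr0 -[in RHS](qchar_sqrM _ v0); congr qchar; field.
under eq_bigr do rewrite shift.
rewrite sumrB (sum_invr (fun w => qchar (1 - d * w))) (sum_mulr (fun w => qchar (1 - w))) //.
rewrite sum_subr sum_qchar mul0r (bigD1 (0 : F)) //= eqxx big1 ?addr0 //.
by move=> v /negPf ->.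
Qed.

Lemma sum_qchar_quad b c : \sum_v qchar ((v - b) * (v - c)) = (b == c)%:R * q - 1.
Proof.
rewrite -(sum_addr _ c) -[b == c]subr_eq0 -sum_qchar_mul_sub.
by apply: eq_bigr => v _; congr qchar; ring.
Qed.

Definition P (u v : F) : F := (u * v + 1) * (u + v).

Lemma sum_qchar_P u : \sum_v qchar (P u v) = qchar u * ((u ^+ 2 == 1)%:R * q - 1).
Proof.
have [->|u0] := eqVneq u 0.
  rewrite qchar0 mul0r -[RHS]sum_qchar.
  by apply: eq_bigr => v _; congr qchar; rewrite /P; ring.
have factor v : P u v = u * ((v - - u^-1) * (v - - u)) by rewrite /P; field.
under eq_bigr do rewrite factor qcharM.
rewrite -mulr_sumr sum_qchar_quad eqr_opp -(inj_eq (mulfI u0)) mulfV //.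
by rewrite eq_sym -expr2.
Qed.

Lemma sum_weighted_qchar_P (g : F -> int) :
  \sum_u g u * \sum_v qchar (P u v)
    = q * (g 1 + g (-1) * qchar (-1)) - \sum_u g u * qchar u.
Proof.
have expand u : g u * \sum_v qchar (P u v)
    = (u ^+ 2 == 1)%:R * (q * (g u * qchar u)) - g u * qchar u.
  by rewrite sum_qchar_P; ring.
under eq_bigr do rewrite expand.
by rewrite sumrB sum_sqr_eq1 qchar1 mulr1 mulrDr.
Qed.

Lemma sum_qchar_P_sqr :
  \sum_x \sum_y qchar (P (x ^+ 2) (y ^+ 2))
    = 3 * q + 2 + q * qchar (-1) + \sum_u \sum_v qchar (u * v * P u v).
Proof.
transitivity (\sum_u \sum_v (1 + qchar u) * (1 + qchar v) * qchar (P u v)).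
  rewrite (sum_sqr (fun u => \sum_y qchar (P u (y ^+ 2)))); apply: eq_bigr => u _.
  rewrite (sum_sqr (fun v => qchar (P u v))) mulr_sumr.
  by apply: eq_bigr => v _; rewrite mulrA.
have expand u v : (1 + qchar u) * (1 + qchar v) * qchar (P u v)
    = (1 + qchar u) * qchar (P u v) + qchar v * qchar (P v u) + qchar (u * v * P u v).
  by rewrite [P v u]/P [v * u]mulrC [v + u]addrC !qcharM; ring.
under eq_bigr do (under eq_bigr do rewrite expand; rewrite !big_split /= -mulr_sumr).
rewrite !big_split /= [X in _ + X + _]exchange_big /=.
under [X in _ + X + _]eq_bigr do rewrite -mulr_sumr.
rewrite !sum_weighted_qchar_P qchar1.
have sqr_qcharN1 : qchar (-1) * qchar (-1) = 1.
  by rewrite -expr2 sqr_qchar oppr_eq0 oner_neq0.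
have sum_sqr_qchar : \sum_u qchar u * qchar u = q - 1.
  by rewrite -sum_nonzero; apply: eq_bigr => u _; rewrite -expr2 sqr_qchar.
have sum_weight : \sum_u (1 + qchar u) * qchar u = q - 1.
  by under eq_bigr do rewrite mulrDl mul1r; rewrite big_split /= sum_qchar sum_sqr_qchar add0r.
by rewrite sum_weight sum_sqr_qchar mulrDl mul1r sqr_qcharN1; ring.
Qed.

Lemma sqr_sum_qchar_cubic :
  (\sum_x qchar (x ^+ 3 - x)) ^+ 2
    = q * (1 + qchar (-1)) + \sum_u \sum_v qchar (u * v * P u v).
Proof.
pose g r u := qchar (r * (u - 1) * (u * r ^+ 2 - 1)).
(* The substitutions are y = x r, then v = - r u, then (u, v) |-> (- r, r u). *)
have rescale x : qchar (x ^+ 3 - x) * \sum_y qchar (y ^+ 3 - y) = \sum_r g r (x ^+ 2).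
  rewrite mulr_sumr; have [->|x0] := eqVneq x 0.
    rewrite big1 => [|y _]; last by rewrite expr0n subrr qchar0 mul0r.
    by rewrite -[LHS]sum_qchar; apply: eq_bigr => r _; congr qchar; ring.
  rewrite -(sum_mulr _ x0); apply: eq_bigr => r _.
  by rewrite /g -qcharM -[RHS](qchar_sqrM _ x0); congr qchar; ring.
have sum_g r : \sum_u g r u = \sum_v qchar (P r v).
  have [->|r0] := eqVneq r 0.
    rewrite big1 => [|u _]; last by rewrite /g !mul0r qchar0.
    by rewrite -[LHS]sum_qchar; apply: eq_bigr => v _; rewrite /P; congr qchar; ring.
  rewrite -(sum_oppr (fun v => qchar (P r v))) -[RHS](sum_mulr _ r0).
  by apply: eq_bigr => u _; rewrite /g /P; congr qchar; ring.
have sum_qchar_mul_g r : \sum_u qchar u * g r u = \sum_v qchar (- r * v * P (- r) v).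
  have [->|r0] := eqVneq r 0.
    by rewrite !big1 // => u _; rewrite ?oppr0 /g !mul0r ?qchar0 ?mulr0.
  rewrite -[RHS](sum_mulr _ r0); apply: eq_bigr => u _.
  by rewrite /g -qcharM -[LHS](qchar_sqrM _ r0); congr qchar; rewrite /P; ring.
rewrite expr2 mulr_suml; under eq_bigr do rewrite rescale.
rewrite (sum_sqr (fun u => \sum_r g r u)).
under eq_bigr do rewrite mulrDl mul1r mulr_sumr.
rewrite big_split /= exchange_big /= [X in _ + X]exchange_big /=.
under eq_bigr do rewrite sum_g; under [X in _ + X]eq_bigr do rewrite sum_qchar_mul_g.
rewrite (sum_oppr (fun u => \sum_v qchar (u * v * P u v))); congr (_ + _).
transitivity (\sum_r 1 * \sum_v qchar (P r v)).
  by apply: eq_bigr => r _; rewrite mul1r.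
rewrite (sum_weighted_qchar_P (fun=> 1)) /=.
by under eq_bigr do rewrite mul1r; rewrite sum_qchar !mul1r subr0.
Qed.

Lemma card_surface :
  #|[set t : F * F * F | let: (x, y, z) := t in
      z ^+ 2 == (x ^+ 2 * y ^+ 2 + 1) * (x ^+ 2 + y ^+ 2)]|%:Z
    = q ^+ 2 + \sum_x \sum_y qchar (P (x ^+ 2) (y ^+ 2)).
Proof.
rewrite card_set_sumz.
transitivity (\sum_(x : F) \sum_(y : F) \sum_(z : F)
    (z ^+ 2 == (x ^+ 2 * y ^+ 2 + 1) * (x ^+ 2 + y ^+ 2))%:R : int).
  by rewrite !pair_big; apply: eq_bigr => -[[x y] z].
have fiber x y : \sum_z (z ^+ 2 == (x ^+ 2 * y ^+ 2 + 1) * (x ^+ 2 + y ^+ 2))%:R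
    = 1 + qchar (P (x ^+ 2) (y ^+ 2)) :> int.
  by rewrite -card_set_sumz card_sqrt.
under eq_bigr do (under eq_bigr do rewrite fiber; rewrite big_split /= sumr1_card).
by rewrite big_split /= sumr_const -mulr_natr natz -expr2.
Qed.

Lemma card_curve :
  #|[set t : F * F | let: (x, y) := t in y ^+ 2 == x ^+ 3 - x]|%:Z
    = q + \sum_x qchar (x ^+ 3 - x).
Proof.
rewrite card_set_sumz.
transitivity (\sum_(x : F) \sum_(y : F) (y ^+ 2 == x ^+ 3 - x)%:R : int).
  by rewrite pair_big; apply: eq_bigr => -[x y].
rewrite -sumr1_card -big_split; apply: eq_bigr => x _.
by rewrite -card_set_sumz card_sqrt.
Qed.

Lemma card_surface_curve_sum :
  #|[set t : F * F * F | let: (x, y, z) := t in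
      z ^+ 2 == (x ^+ 2 * y ^+ 2 + 1) * (x ^+ 2 + y ^+ 2)]|%:Z
    = (q + 1) ^+ 2 + (\sum_x qchar (x ^+ 3 - x)) ^+ 2 + 1.
Proof.
by rewrite card_surface sum_qchar_P_sqr sqr_sum_qchar_cubic; ring.
Qed.

Lemma qcharN1_3mod4 k : #|F| = (4 * k + 3)%N -> qchar (-1) = -1.
Proof.
move=> card_F; apply: intr_inj_norm_le1; rewrite ?normr_qchar_le1 //.
rewrite euler_criterion card_F.
have -> : ((4 * k + 3)./2 = 2 * k + 1)%N by lia.
by rewrite exprD exprM sqrrN !expr1n mul1r.
Qed.

Lemma sum_qchar_cubic_eq0 : qchar (-1) = -1 -> \sum_x qchar (x ^+ 3 - x) = 0.
Proof.
move=> qcharN1.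
suff : \sum_x qchar (x ^+ 3 - x) = - \sum_x qchar (x ^+ 3 - x) by lia.
rewrite -[LHS]sum_oppr -sumrN; apply: eq_bigr => x _.
by rewrite -[RHS]mulN1r -qcharN1 -qcharM; congr qchar; ring.
Qed.

Lemma sum_qchar_cubic_shift :
  \sum_x qchar (x ^+ 3 - x) = \sum_x qchar (x * (x + 1) * (x + 2)).
Proof. by rewrite -(sum_addr _ 1); apply: eq_bigr => x _; congr qchar; ring. Qed.

End QuadraticCharacter.

Section PrimeField.

Variable p : nat.
Hypothesis p_prime : prime p.

Lemma sum_Fp (V : nmodType) (f : 'F_p -> V) :
  \sum_x f x = \sum_(0 <= i < p) f i%:R.
Proof.
have lt_p (x : 'F_p) : (x < p)%N by rewrite -[p in (_ < p)%N](Fp_cast p_prime).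
rewrite big_mkord (reindex (fun i : 'I_p => i%:R : 'F_p)) //.
by exists (fun x => Ordinal (lt_p x)) => [i|x] _; apply: val_inj;
  rewrite /= val_Fp_nat // modn_small.
Qed.

Lemma legendre_qchar (n : nat) : legendre n p = qchar (n%:R : 'F_p).
Proof.
by rewrite /legendre /qchar dvdzE /= (dvdn_pcharf (pchar_Fp p_prime)) pmulrn.
Qed.

Lemma sum_qchar_cubic_Fp k : p = (4 * k + 1)%N ->
  \sum_(x : 'F_p) qchar (x ^+ 3 - x) = J p k.
Proof.
move=> p_eq; have k_gt0 : (0 < k)%N by case: k p_eq => // p1; move: p_prime; rewrite p1.
have p_eq' : p = (4 * k - 2).+3 by lia.
rewrite sum_qchar_cubic_shift sum_Fp.
transitivity (\sum_(0 <= i < (4 * k - 2).+3) legendre (i * (i + 1) * (i + 2))%N p).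
  by rewrite -p_eq'; apply: eq_bigr => i _; rewrite legendre_qchar !natrM !natrD.
have vanish i : (p %| i * (i + 1) * (i + 2))%N -> legendre (i * (i + 1) * (i + 2))%N p = 0.
  by rewrite /legendre dvdzE /= => ->.
(* The terms i = 0, p - 2 and p - 1 vanish. *)
rewrite big_ltn // big_nat_recr // big_nat_recr // !vanish /= ?add0r ?addr0 //.
- by rewrite dvdn_mulr // dvdn_mull // addn1 -p_eq'.
- by rewrite dvdn_mull // addn2 -p_eq'.
Qed.

Hypothesis p_odd : odd p.

Lemma two_neq0_Fp : (2 : 'F_p) != 0.
Proof.
rewrite -(dvdn_pcharf (pchar_Fp p_prime)); apply: contraL p_odd => p_dvd2.
by have := dvdn_leq (isT : (0 < 2)%N) p_dvd2; case: p p_prime => [|[|[]]].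
Qed.

End PrimeField.

Theorem theorem4p5 (p : nat) (hp : prime p) (hodd : odd p) :
  (M_count p)%:Z = (p%:Z + 1) ^+ 2 + ((N_count p)%:Z - p%:Z) ^+ 2 + 1
  /\ (forall k : nat, p = (4 * k + 1)%N ->
        (M_count p)%:Z = (p%:Z + 1) ^+ 2 + (J p k) ^+ 2 + 1)
  /\ (forall k : nat, p = (4 * k + 3)%N ->
        (M_count p)%:Z = (p%:Z + 1) ^+ 2 + 1).
Proof.
have two_neq0 := two_neq0_Fp hp hodd.
have M_eq : (M_count p)%:Z = (p%:Z + 1) ^+ 2 + (\sum_(x : 'F_p) qchar (x ^+ 3 - x)) ^+ 2 + 1.
  by rewrite /M_count (card_surface_curve_sum two_neq0) card_Fp.
have N_eq : (N_count p)%:Z - p%:Z = \sum_(x : 'F_p) qchar (x ^+ 3 - x).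
  by rewrite /N_count (card_curve two_neq0) card_Fp // addrC addKr.
split; [by rewrite M_eq N_eq | split => k p_eq; rewrite M_eq].
  by rewrite (sum_qchar_cubic_Fp hp p_eq).
by rewrite sum_qchar_cubic_eq0 ?expr0n ?addr0 // (@qcharN1_3mod4 _ two_neq0 k) ?card_Fp.
Qed.
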